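(* Let $\gamma=(\gamma_1,\dots,\gamma_d)\in\mathbb R^d$ and $\mathbf n\in\mathbb N_0^d$ with $n_i\ge1$ for $1\le i\le d$. Then $$P_{\mathbf n}^{(\gamma,-1)}(x)=(1-|x|)\sum_{i=1}^d\frac{n_i(\gamma_i+n_i)}{|\mathbf n|}P_{\mathbf n-e_i}^{(\gamma,1)}(x).$$
   Context: $|x|=x_1+\dots+x_d$, $|\mathbf n|=n_1+\dots+n_d$, $e_i$ the standard basis of $\mathbb R^d$. For $\boldsymbol\gamma=(\gamma_1,\dots,\gamma_{d+1})\in\mathbb R^{d+1}$ and $\mathbf n\in\mathbb N_0^d$, the Rodrigues function on the interior of the simplex $T^d=\{x_i\ge0,|x|\le1\}$ is $P_{\mathbf n}^{\boldsymbol\gamma}(x)=x_1^{-\gamma_1}\cdots x_d^{-\gamma_d}(1-|x|)^{-\gamma_{d+1}}\frac{\partial^{|\mathbf n|}}{\partial x_1^{n_1}\cdots\partial x_d^{n_d}}\big[x_1^{\gamma_1+n_1}\cdots x_d^{\gamma_d+n_d}(1-|x|)^{\gamma_{d+1}+|\mathbf n|}\big]$; $(\gamma,c)$ denotes $(\gamma_1,\dots,\gamma_d,c)$. *)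

From Stdlib Require Import Reals Lra Lia.
From Coquelicot Require Import Coquelicot.
Open Scope R_scope.

(* Points of R^d are represented as x : nat -> R, only x 0, ..., x (d-1) matter
   (coordinate i here corresponds to x_{i+1} in the paper).
   Multi-indices are n : nat -> nat likewise. *)

Fixpoint sumR (d : nat) (f : nat -> R) : R :=
  match d with O => 0 | S d' => sumR d' f + f d' end.
Fixpoint prodR (d : nat) (f : nat -> R) : R :=
  match d with O => 1 | S d' => prodR d' f * f d' end.

Definition absx (d : nat) (x : nat -> R) : R := sumR d x.
Definition absn (d : nat) (n : nat -> nat) : R := sumR d (fun i => INR (n i)).

Definition in_simplex_interior (d : nat) (x : nat -> R) : Prop :=
  (forall i, (i < d)%nat -> 0 < x i) /\ absx d x < 1.

Definition upd (x : nat -> R) (i : nat) (t : R) : nat -> R :=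
  fun j => if Nat.eqb j i then t else x j.

Definition partial (i : nat) (f : (nat -> R) -> R) : (nat -> R) -> R :=
  fun x => Derive (fun t => f (upd x i t)) (x i).

Definition iter_partial (i k : nat) (f : (nat -> R) -> R) : (nat -> R) -> R :=
  Nat.iter k (partial i) f.

Fixpoint Dmulti (d : nat) (n : nat -> nat) (f : (nat -> R) -> R) : (nat -> R) -> R :=
  match d with
  | O => f
  | S d' => Dmulti d' n (iter_partial d' (n d') f)
  end.

Definition rpow (a b : R) : R := Rpower a b.

(* Rodrigues function P_n^{(gamma, c)}(x), gamma = (gamma_1..gamma_d), gamma_{d+1} = c *)
Definition Rodrigues (d : nat) (gamma : nat -> R) (c : R) (n : nat -> nat)
  (x : nat -> R) : R :=
  prodR d (fun i => rpow (x i) (- gamma i)) * rpow (1 - absx d x) (- c) *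
  Dmulti d n
    (fun y => prodR d (fun i => rpow (y i) (gamma i + INR (n i))) *
              rpow (1 - absx d y) (c + absn d n)) x.

Definition sub_e (n : nat -> nat) (i : nat) : nat -> nat :=
  fun j => if Nat.eqb j i then (n j - 1)%nat else n j.

From Stdlib Require Import Reals Lra Lia FunctionalExtensionality List.
From Coquelicot Require Import Coquelicot.
Open Scope R_scope.

(* On the open simplex, write w = 1 - |x| and call "simplex polynomials" the
   finite linear combinations of monomials x^a w^b with real exponents.  They
   are closed under partial derivatives, which act linearly and commute on
   them, and the Leibniz rule with d_j w = -1 gives
     D^n (w F) = w D^n F - sum_j n_j D^(n-e_j) F.
   Take F = x^(gamma+n) w^(|n|-1), so that w F = x^(gamma+n) w^|n| =: H.
   Differentiating H first in x_i gives
     D^n H = (gamma_i+n_i) D^(n-e_i) G_i - |n| D^(n-e_i) F,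
   with G_i = x^(gamma+n-e_i) w^|n|.  Averaging these identities with weights
   n_i/|n| and comparing with the Leibniz formula for D^n (w F) leaves
     w D^n F = sum_i n_i (gamma_i+n_i)/|n| D^(n-e_i) G_i,
   which is the claim after multiplying by x^(-gamma). *)

Lemma sumR_ext d f g : (forall i, (i < d)%nat -> f i = g i) -> sumR d f = sumR d g.
Proof.
  induction d; simpl; intros H; [reflexivity|].
  rewrite IHd by (intros; apply H; lia). rewrite H by lia. reflexivity.
Qed.

Lemma prodR_ext d f g : (forall i, (i < d)%nat -> f i = g i) -> prodR d f = prodR d g.
Proof.
  induction d; simpl; intros H; [reflexivity|].
  rewrite IHd by (intros; apply H; lia). rewrite H by lia. reflexivity.
Qed.

Lemma sumR_add d f g : sumR d (fun i => f i + g i) = sumR d f + sumR d g.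
Proof. induction d; simpl; [ring|]. rewrite IHd. ring. Qed.

Lemma sumR_scal d c f : sumR d (fun i => c * f i) = c * sumR d f.
Proof. induction d; simpl; [ring|]. rewrite IHd. ring. Qed.

Lemma sumR_update d f i u : (i < d)%nat ->
  sumR d (fun j => if Nat.eqb j i then u else f j) = sumR d f - f i + u.
Proof.
  induction d; intros Hi; [lia|]. simpl.
  destruct (Nat.eq_dec i d) as [->|Hne].
  - rewrite Nat.eqb_refl, (sumR_ext d _ f); [ring|].
    intros j Hj. destruct (Nat.eqb_spec j d); [lia|reflexivity].
  - rewrite IHd by lia. destruct (Nat.eqb_spec d i); [lia|]. ring.
Qed.

Lemma prodR_factor d f i : (i < d)%nat ->
  prodR d f = f i * prodR d (fun j => if Nat.eqb j i then 1 else f j).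
Proof.
  induction d; intros Hi; [lia|]. simpl.
  destruct (Nat.eq_dec i d) as [->|Hne].
  - rewrite Nat.eqb_refl, (prodR_ext d (fun j => if Nat.eqb j d then 1 else f j) f); [ring|].
    intros j Hj. destruct (Nat.eqb_spec j d); [lia|reflexivity].
  - rewrite IHd at 1 by lia. destruct (Nat.eqb_spec d i); [lia|]. ring.
Qed.

Lemma sumR_ge0 d f : (forall i, (i < d)%nat -> 0 <= f i) -> 0 <= sumR d f.
Proof.
  induction d; simpl; intros H; [lra|].
  assert (0 <= f d) by (apply H; lia).
  assert (0 <= sumR d f) by (apply IHd; intros; apply H; lia). lra.
Qed.

Lemma sumR_ge_term d f j : (forall i, (i < d)%nat -> 0 <= f i) -> (j < d)%nat ->
  f j <= sumR d f.
Proof.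
  induction d; intros H Hj; [lia|]. simpl.
  assert (0 <= f d) by (apply H; lia).
  destruct (Nat.eq_dec j d) as [->|].
  - assert (0 <= sumR d f) by (apply sumR_ge0; intros; apply H; lia). lra.
  - assert (f j <= sumR d f) by (apply IHd; [intros; apply H; lia|lia]). lra.
Qed.

Lemma is_derive_eq (f : R -> R) x (l l' : R) : is_derive f x l -> @eq R l l' -> is_derive f x l'.
Proof. intros H ->; exact H. Qed.

Lemma is_derive_rpow x b : 0 < x -> is_derive (fun t => rpow t b) x (b * rpow x (b - 1)).
Proof. intros H. apply is_derive_Reals, derivable_pt_lim_power, H. Qed.

Lemma is_derive_rpow_sub K b t : 0 < K - t ->
  is_derive (fun s => rpow (K - s) b) t (- (b * rpow (K - t) (b - 1))).
Proof.
  intros H.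
  assert (Hlin : is_derive (fun s : R => K - s) t (-1)).
  { eapply is_derive_eq.
    - apply (is_derive_minus (fun _ => K) (fun s => s));
        [apply is_derive_const | apply is_derive_id].
    - simpl. unfold minus, zero, one, plus, opp; simpl. ring. }
  eapply is_derive_eq.
  - apply (is_derive_comp (fun s => rpow s b) (fun s => K - s));
      [apply is_derive_rpow, H | exact Hlin].
  - unfold scal; simpl. unfold mult; simpl. ring.
Qed.

Lemma is_derive_rpow_mul_rpow_sub a Q K b t : 0 < t -> 0 < K - t ->
  is_derive (fun s => rpow s a * Q * rpow (K - s) b) t
    (a * rpow t (a - 1) * Q * rpow (K - t) b + rpow t a * Q * (- (b * rpow (K - t) (b - 1)))).
Proof.
  intros Ht HKt.
  eapply is_derive_eq.
  - apply (is_derive_mult (fun s => rpow s a * Q) (fun s => rpow (K - s) b)).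
    + eapply is_derive_eq.
      * apply (is_derive_mult (fun s => rpow s a) (fun _ => Q));
          [apply is_derive_rpow, Ht | apply is_derive_const | intros; apply Rmult_comm].
      * reflexivity.
    + apply is_derive_rpow_sub, HKt.
    + intros; apply Rmult_comm.
  - unfold plus, mult, zero; simpl. ring.
Qed.

Lemma iter_succ_in {A} k (p : A -> A) f : Nat.iter k p (p f) = p (Nat.iter k p f).
Proof. induction k; simpl; [reflexivity|]. rewrite IHk. reflexivity. Qed.

Section SimplexPolynomials.

Variable d : nat.

Definition eq_on_simplex (f g : (nat -> R) -> R) : Prop :=
  forall x, in_simplex_interior d x -> f x = g x.

Lemma eq_on_simplex_refl f : eq_on_simplex f f.
Proof. intros x _; reflexivity. Qed.

Lemma eq_on_simplex_trans f g h :
  eq_on_simplex f g -> eq_on_simplex g h -> eq_on_simplex f h.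
Proof. intros H1 H2 x Hx. rewrite H1, H2 by exact Hx. reflexivity. Qed.

Lemma simplex_weight_gt0 x : in_simplex_interior d x -> 0 < 1 - absx d x.
Proof. intros [_ H]. lra. Qed.

Lemma near_upd_in_simplex x i : in_simplex_interior d x -> (i < d)%nat ->
  locally (x i) (fun t => in_simplex_interior d (upd x i t)).
Proof.
  intros [Hpos Hsum] Hi.
  assert (Hxi : 0 < x i) by (apply Hpos, Hi).
  assert (He : 0 < Rmin (x i) (1 - absx d x)) by (apply Rmin_pos; lra).
  exists (mkposreal _ He). intros t Ht. simpl in Ht.
  unfold ball in Ht; simpl in Ht; unfold AbsRing_ball, abs, minus, plus, opp in Ht; simpl in Ht.
  apply Rabs_def2 in Ht. destruct Ht as [Ht1 Ht2].
  assert (Hm1 := Rmin_l (x i) (1 - absx d x)). assert (Hm2 := Rmin_r (x i) (1 - absx d x)).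
  split.
  - intros j Hj. unfold upd. destruct (Nat.eqb j i); [lra | apply Hpos, Hj].
  - unfold absx, upd. rewrite sumR_update by exact Hi. unfold absx in *. lra.
Qed.

Lemma partial_eq_on_simplex f g i : (i < d)%nat ->
  eq_on_simplex f g -> eq_on_simplex (partial i f) (partial i g).
Proof.
  intros Hi H x Hx. unfold partial. apply Derive_ext_loc.
  generalize (near_upd_in_simplex x i Hx Hi). apply filter_imp. intros t Ht. apply H, Ht.
Qed.

Definition mono (a : nat -> R) (b : R) (y : nat -> R) : R :=
  prodR d (fun i => rpow (y i) (a i)) * rpow (1 - absx d y) b.

Definition dec_at (a : nat -> R) (i : nat) : nat -> R :=
  fun j => if Nat.eqb j i then a j - 1 else a j.

Lemma mono_ext a a' b b' y : (forall j, (j < d)%nat -> a j = a' j) -> b = b' ->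
  mono a b y = mono a' b' y.
Proof.
  intros H <-. unfold mono. rewrite (prodR_ext d _ (fun i => rpow (y i) (a' i))); [reflexivity|].
  intros j Hj. rewrite H by exact Hj. reflexivity.
Qed.

Lemma mono_factor a b y i : (i < d)%nat ->
  mono a b y = rpow (y i) (a i) * prodR d (fun j => if Nat.eqb j i then 1 else rpow (y j) (a j))
               * rpow (1 - absx d y) b.
Proof. intros Hi. unfold mono. rewrite (prodR_factor d _ i Hi). reflexivity. Qed.

Lemma mono_weight a b x : in_simplex_interior d x ->
  mono a (b + 1) x = (1 - absx d x) * mono a b x.
Proof.
  intros Hx. unfold mono, rpow.
  rewrite Rpower_plus, Rpower_1 by apply (simplex_weight_gt0 x Hx). ring.
Qed.

Lemma is_derive_mono a b x i : in_simplex_interior d x -> (i < d)%nat ->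
  is_derive (fun t => mono a b (upd x i t)) (x i)
    (a i * mono (dec_at a i) b x - b * mono a (b - 1) x).
Proof.
  intros Hx Hi.
  set (Q := prodR d (fun j => if Nat.eqb j i then 1 else rpow (x j) (a j))).
  set (K := 1 - absx d x + x i).
  assert (Hxi : 0 < x i) by (apply (proj1 Hx), Hi).
  assert (Hw := simplex_weight_gt0 x Hx).
  (* along the i-th coordinate line, 1 - |y| = K - y_i *)
  assert (Hline : forall t, mono a b (upd x i t) = rpow t (a i) * Q * rpow (K - t) b).
  { intros t. rewrite (mono_factor a b (upd x i t) i Hi).
    unfold upd at 1. rewrite Nat.eqb_refl.
    rewrite (prodR_ext d (fun j => if Nat.eqb j i then 1 else rpow (upd x i t j) (a j))
               (fun j => if Nat.eqb j i then 1 else rpow (x j) (a j))).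
    - fold Q. unfold absx, upd. rewrite sumR_update by exact Hi. unfold K, absx.
      replace (1 - (sumR d x - x i + t)) with (1 - sumR d x + x i - t) by ring. reflexivity.
    - intros j _. unfold upd. destruct (Nat.eqb j i); reflexivity. }
  eapply is_derive_ext; [intros t; symmetry; apply Hline|].
  eapply is_derive_eq;
    [apply (is_derive_rpow_mul_rpow_sub (a i) Q K b (x i)); [exact Hxi | unfold K; lra]|].
  rewrite (mono_factor (dec_at a i) b x i Hi), (mono_factor a (b - 1) x i Hi).
  unfold dec_at at 1. rewrite Nat.eqb_refl.
  rewrite (prodR_ext d (fun j => if Nat.eqb j i then 1 else rpow (x j) (dec_at a i j))
             (fun j => if Nat.eqb j i then 1 else rpow (x j) (a j))).
  - fold Q. replace (K - x i) with (1 - absx d x) by (unfold K; ring). ring.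
  - intros j _. unfold dec_at. destruct (Nat.eqb j i); reflexivity.
Qed.

Definition term : Type := (R * (nat -> R) * R)%type.

Fixpoint eval_terms (e : list term) (y : nat -> R) : R :=
  match e with
  | nil => 0
  | (c, a, b) :: e' => c * mono a b y + eval_terms e' y
  end.

Definition deriv_term (i : nat) (t : term) : list term :=
  let '(c, a, b) := t in (c * a i, dec_at a i, b) :: (- (c * b), a, b - 1) :: nil.

Fixpoint deriv_terms (i : nat) (e : list term) : list term :=
  match e with nil => nil | t :: e' => deriv_term i t ++ deriv_terms i e' end.

Definition scale_terms (k : R) (e : list term) : list term :=
  map (fun '(c, a, b) => (k * c, a, b)) e.

Definition weight_terms (e : list term) : list term :=
  map (fun '(c, a, b) => (c, a, b + 1)) e.

Lemma eval_terms_app e1 e2 y : eval_terms (e1 ++ e2) y = eval_terms e1 y + eval_terms e2 y.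
Proof. induction e1 as [|[[c a] b] e1 IH]; simpl; [ring|]. rewrite IH. ring. Qed.

Lemma eval_terms_scale k e y : eval_terms (scale_terms k e) y = k * eval_terms e y.
Proof. induction e as [|[[c a] b] e IH]; simpl; [ring|]. rewrite IH. ring. Qed.

Lemma eval_terms_weight e x : in_simplex_interior d x ->
  eval_terms (weight_terms e) x = (1 - absx d x) * eval_terms e x.
Proof.
  intros Hx. induction e as [|[[c a] b] e IH]; simpl; [ring|].
  rewrite IH, mono_weight by exact Hx. ring.
Qed.

Lemma deriv_terms_app i e1 e2 : deriv_terms i (e1 ++ e2) = deriv_terms i e1 ++ deriv_terms i e2.
Proof. induction e1; simpl; [reflexivity|]. rewrite IHe1, app_assoc. reflexivity. Qed.

Lemma eval_deriv_terms_scale i k e y :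
  eval_terms (deriv_terms i (scale_terms k e)) y = k * eval_terms (deriv_terms i e) y.
Proof. induction e as [|[[c a] b] e IH]; simpl; [ring|]. rewrite IH. ring. Qed.

Lemma eval_deriv_terms_weight i e x : in_simplex_interior d x ->
  eval_terms (deriv_terms i (weight_terms e)) x
  = (1 - absx d x) * eval_terms (deriv_terms i e) x - eval_terms e x.
Proof.
  intros Hx. induction e as [|[[c a] b] e IH]; simpl; [ring|].
  rewrite IH, (mono_weight (dec_at a i) b x Hx).
  replace (b + 1 - 1) with (b - 1 + 1) by ring.
  replace (mono a b x) with (mono a (b - 1 + 1) x) by (f_equal; ring).
  rewrite (mono_weight a (b - 1) x Hx). ring.
Qed.

Lemma eval_deriv_terms_comm i j e y :
  eval_terms (deriv_terms i (deriv_terms j e)) y = eval_terms (deriv_terms j (deriv_terms i e)) y.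
Proof.
  destruct (Nat.eq_dec i j) as [->|Hne]; [reflexivity|].
  induction e as [|[[c a] b] e IH]; simpl; [reflexivity|].
  rewrite IH.
  assert (Ei : dec_at a j i = a i)
    by (unfold dec_at; destruct (Nat.eqb_spec i j); [lia|reflexivity]).
  assert (Ej : dec_at a i j = a j)
    by (unfold dec_at; destruct (Nat.eqb_spec j i); [lia|reflexivity]).
  assert (Eij : dec_at (dec_at a j) i = dec_at (dec_at a i) j).
  { apply functional_extensionality; intros k. unfold dec_at.
    destruct (Nat.eqb_spec k i), (Nat.eqb_spec k j); subst; try lia; reflexivity. }
  rewrite Ei, Ej, Eij. ring.
Qed.

Lemma partial_eval_terms e i : (i < d)%nat ->
  eq_on_simplex (partial i (eval_terms e)) (eval_terms (deriv_terms i e)).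
Proof.
  intros Hi x Hx. unfold partial. apply is_derive_unique.
  induction e as [|[[c a] b] e IH]; simpl.
  - eapply is_derive_eq; [apply is_derive_const | reflexivity].
  - eapply is_derive_eq.
    + apply (is_derive_plus (fun t => c * mono a b (upd x i t))
                            (fun t => eval_terms e (upd x i t))).
      * apply is_derive_scal, is_derive_mono; assumption.
      * exact IH.
    + unfold plus; simpl. ring.
Qed.

Lemma partial_eq_eval_terms f e i : (i < d)%nat ->
  eq_on_simplex f (eval_terms e) -> eq_on_simplex (partial i f) (eval_terms (deriv_terms i e)).
Proof.
  intros Hi H.
  eapply eq_on_simplex_trans;
    [apply partial_eq_on_simplex; eassumption | apply partial_eval_terms, Hi].
Qed.

Definition simplex_poly (f : (nat -> R) -> R) : Prop :=
  exists e, eq_on_simplex f (eval_terms e).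

Lemma simplex_poly_mono a b : simplex_poly (mono a b).
Proof. exists ((1, a, b) :: nil). intros x _. simpl. ring. Qed.

Lemma simplex_poly_partial f i : (i < d)%nat -> simplex_poly f -> simplex_poly (partial i f).
Proof. intros Hi [e He]. exists (deriv_terms i e). apply partial_eq_eval_terms; assumption. Qed.

Lemma weight_eq_eval_terms f e : eq_on_simplex f (eval_terms e) ->
  eq_on_simplex (fun y => (1 - absx d y) * f y) (eval_terms (weight_terms e)).
Proof. intros H x Hx. rewrite eval_terms_weight, H by exact Hx. reflexivity. Qed.

Lemma simplex_poly_weight f : simplex_poly f -> simplex_poly (fun y => (1 - absx d y) * f y).
Proof. intros [e H]. exists (weight_terms e). apply weight_eq_eval_terms, H. Qed.

Lemma partial_lin a b f g i : (i < d)%nat -> simplex_poly f -> simplex_poly g ->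
  eq_on_simplex (partial i (fun y => a * f y + b * g y))
                (fun y => a * partial i f y + b * partial i g y).
Proof.
  intros Hi [e1 H1] [e2 H2].
  assert (E : eq_on_simplex (fun y => a * f y + b * g y)
                            (eval_terms (scale_terms a e1 ++ scale_terms b e2))).
  { intros x Hx. rewrite eval_terms_app, !eval_terms_scale, H1, H2 by exact Hx. reflexivity. }
  intros x Hx.
  rewrite (partial_eq_eval_terms _ _ i Hi E x Hx), (partial_eq_eval_terms _ _ i Hi H1 x Hx),
          (partial_eq_eval_terms _ _ i Hi H2 x Hx).
  rewrite deriv_terms_app, eval_terms_app, !eval_deriv_terms_scale. reflexivity.
Qed.

Lemma partial_weight f i : (i < d)%nat -> simplex_poly f ->
  eq_on_simplex (partial i (fun y => (1 - absx d y) * f y))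
                (fun y => (1 - absx d y) * partial i f y - f y).
Proof.
  intros Hi [e H] x Hx.
  rewrite (partial_eq_eval_terms _ _ i Hi (weight_eq_eval_terms _ _ H) x Hx),
          (partial_eq_eval_terms _ _ i Hi H x Hx).
  rewrite eval_deriv_terms_weight, H by exact Hx. reflexivity.
Qed.

Lemma partial_comm f i j : (i < d)%nat -> (j < d)%nat -> simplex_poly f ->
  eq_on_simplex (partial i (partial j f)) (partial j (partial i f)).
Proof.
  intros Hi Hj [e H] x Hx.
  rewrite (partial_eq_eval_terms _ _ i Hi (partial_eq_eval_terms _ _ j Hj H) x Hx),
          (partial_eq_eval_terms _ _ j Hj (partial_eq_eval_terms _ _ i Hi H) x Hx).
  apply eval_deriv_terms_comm.
Qed.

Lemma iter_partial_eq_on_simplex i m f g : (i < d)%nat ->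
  eq_on_simplex f g -> eq_on_simplex (iter_partial i m f) (iter_partial i m g).
Proof. intros Hi H. induction m; simpl; [exact H | apply partial_eq_on_simplex; assumption]. Qed.

Lemma simplex_poly_iter_partial i m f : (i < d)%nat ->
  simplex_poly f -> simplex_poly (iter_partial i m f).
Proof. intros Hi H. induction m; simpl; [exact H | apply simplex_poly_partial; assumption]. Qed.

Lemma iter_partial_lin i m a b f g : (i < d)%nat -> simplex_poly f -> simplex_poly g ->
  eq_on_simplex (iter_partial i m (fun y => a * f y + b * g y))
                (fun y => a * iter_partial i m f y + b * iter_partial i m g y).
Proof.
  intros Hi Hf Hg. induction m; simpl; [apply eq_on_simplex_refl|].
  eapply eq_on_simplex_trans; [apply partial_eq_on_simplex; [exact Hi | exact IHm]|].
  apply partial_lin; [exact Hi | apply simplex_poly_iter_partial; assumption ..].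
Qed.

(* d_i w = -1, so all higher derivatives of w vanish. *)
Lemma iter_partial_weight i m f : (i < d)%nat -> simplex_poly f ->
  eq_on_simplex (iter_partial i m (fun y => (1 - absx d y) * f y))
    (fun y => (1 - absx d y) * iter_partial i m f y - INR m * iter_partial i (m - 1) f y).
Proof.
  intros Hi Hf. induction m; [intros x _; simpl; ring|].
  change (iter_partial i (S m) ?g) with (partial i (iter_partial i m g)).
  eapply eq_on_simplex_trans.
  { apply partial_eq_on_simplex; [exact Hi|].
    eapply eq_on_simplex_trans; [exact IHm|].
    instantiate (1 := fun y => 1 * ((1 - absx d y) * iter_partial i m f y)
                               + (- INR m) * iter_partial i (m - 1) f y).
    intros x _. ring. }
  eapply eq_on_simplex_trans.
  { apply (partial_lin 1 (- INR m) (fun y => (1 - absx d y) * iter_partial i m f y));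
      [exact Hi | |].
    - apply simplex_poly_weight, simplex_poly_iter_partial; assumption.
    - apply simplex_poly_iter_partial; assumption. }
  intros x Hx. rewrite (partial_weight _ i Hi (simplex_poly_iter_partial i m f Hi Hf) x Hx).
  replace (S m - 1)%nat with m by lia.
  destruct m as [|m]; [simpl; ring|].
  replace (S m - 1)%nat with m by lia.
  change (partial i (iter_partial i m f) x) with (iter_partial i (S m) f x).
  rewrite !S_INR. ring.
Qed.

Lemma partial_iter_partial_comm i j m f : (i < d)%nat -> (j < d)%nat -> simplex_poly f ->
  eq_on_simplex (partial i (iter_partial j m f)) (iter_partial j m (partial i f)).
Proof.
  intros Hi Hj Hf. induction m; simpl; [apply eq_on_simplex_refl|].
  eapply eq_on_simplex_trans;
    [apply partial_comm; [assumption | assumption | apply simplex_poly_iter_partial; assumption]|].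
  apply partial_eq_on_simplex; assumption.
Qed.

Lemma Dmulti_S k n f : Dmulti (S k) n f = Dmulti k n (iter_partial k (n k) f).
Proof. reflexivity. Qed.

Lemma Dmulti_ext_order k n n' f : (forall j, (j < k)%nat -> n j = n' j) ->
  Dmulti k n f = Dmulti k n' f.
Proof.
  revert f. induction k; intros f H; [reflexivity|].
  rewrite !Dmulti_S, (H k) by lia. apply IHk. intros; apply H; lia.
Qed.

Lemma Dmulti_eq_on_simplex k n f g : (k <= d)%nat ->
  eq_on_simplex f g -> eq_on_simplex (Dmulti k n f) (Dmulti k n g).
Proof.
  revert f g. induction k; intros f g Hk H; [exact H|].
  rewrite !Dmulti_S. apply IHk; [lia|]. apply iter_partial_eq_on_simplex; [lia | exact H].
Qed.

Lemma Dmulti_lin k n a b f g : (k <= d)%nat -> simplex_poly f -> simplex_poly g ->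
  eq_on_simplex (Dmulti k n (fun y => a * f y + b * g y))
                (fun y => a * Dmulti k n f y + b * Dmulti k n g y).
Proof.
  revert f g. induction k; intros f g Hk Hf Hg; [apply eq_on_simplex_refl|].
  rewrite !Dmulti_S.
  eapply eq_on_simplex_trans;
    [apply Dmulti_eq_on_simplex; [lia | apply iter_partial_lin; [lia | assumption ..]]|].
  apply IHk; [lia | apply simplex_poly_iter_partial; [lia | assumption] ..].
Qed.

Lemma sub_e_same n i : sub_e n i i = (n i - 1)%nat.
Proof. unfold sub_e. rewrite Nat.eqb_refl. reflexivity. Qed.

Lemma sub_e_other n i j : j <> i -> sub_e n i j = n j.
Proof. intros H. unfold sub_e. destruct (Nat.eqb_spec j i); [lia|reflexivity]. Qed.

Lemma absn_sub_e n i : (i < d)%nat -> (1 <= n i)%nat -> absn d (sub_e n i) = absn d n - 1.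
Proof.
  intros Hi Hn. unfold absn.
  rewrite (sumR_ext d (fun j => INR (sub_e n i j))
             (fun j => if Nat.eqb j i then INR (n i) - 1 else INR (n j))).
  - rewrite sumR_update by exact Hi. ring.
  - intros j _. unfold sub_e. destruct (Nat.eqb_spec j i); [|reflexivity].
    subst. rewrite minus_INR by exact Hn. simpl. ring.
Qed.

Lemma Dmulti_weight k n f : (k <= d)%nat -> simplex_poly f ->
  eq_on_simplex (Dmulti k n (fun y => (1 - absx d y) * f y))
    (fun y => (1 - absx d y) * Dmulti k n f y
              - sumR k (fun j => INR (n j) * Dmulti k (sub_e n j) f y)).
Proof.
  revert f. induction k; intros f Hk Hf; [intros x _; simpl; ring|].
  rewrite Dmulti_S.
  set (A := iter_partial k (n k) f). set (B := iter_partial k (n k - 1) f).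
  assert (HA : simplex_poly A) by (apply simplex_poly_iter_partial; [lia | exact Hf]).
  assert (HB : simplex_poly B) by (apply simplex_poly_iter_partial; [lia | exact Hf]).
  eapply eq_on_simplex_trans.
  { apply Dmulti_eq_on_simplex; [lia|].
    eapply eq_on_simplex_trans; [apply iter_partial_weight; [lia | exact Hf]|].
    instantiate (1 := fun y => 1 * ((1 - absx d y) * A y) + (- INR (n k)) * B y).
    intros x _. unfold A, B. ring. }
  eapply eq_on_simplex_trans; [apply Dmulti_lin; [lia | apply simplex_poly_weight, HA | exact HB]|].
  intros x Hx. rewrite (IHk A) by (lia || assumption).
  change (sumR (S k) ?g) with (sumR k g + g k); cbv beta.
  rewrite (sumR_ext k (fun j => INR (n j) * Dmulti (S k) (sub_e n j) f x)
                      (fun j => INR (n j) * Dmulti k (sub_e n j) A x)).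
  - rewrite (Dmulti_S k (sub_e n k) f), (Dmulti_S k n f), sub_e_same.
    rewrite (Dmulti_ext_order k (sub_e n k) n) by (intros j Hj; apply sub_e_other; lia).
    fold A B. ring.
  - intros j Hj. rewrite Dmulti_S, sub_e_other by lia. reflexivity.
Qed.

Lemma Dmulti_partial_first k n f i : (k <= d)%nat -> (i < k)%nat -> (1 <= n i)%nat ->
  simplex_poly f -> eq_on_simplex (Dmulti k n f) (Dmulti k (sub_e n i) (partial i f)).
Proof.
  revert f. induction k; intros f Hk Hi Hn Hf; [lia|].
  rewrite !Dmulti_S. destruct (Nat.eq_dec i k) as [->|Hne].
  - rewrite sub_e_same. unfold iter_partial. rewrite iter_succ_in.
    change (partial k (Nat.iter ?m (partial k) f)) with (Nat.iter (S m) (partial k) f).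
    replace (S (n k - 1)) with (n k) by lia.
    rewrite (Dmulti_ext_order k (sub_e n k) n) by (intros j Hj; apply sub_e_other; lia).
    apply eq_on_simplex_refl.
  - rewrite sub_e_other by lia.
    eapply eq_on_simplex_trans;
      [apply IHk; [lia | lia | exact Hn | apply simplex_poly_iter_partial; [lia | exact Hf]]|].
    apply Dmulti_eq_on_simplex; [lia|]. apply partial_iter_partial_comm; [lia | lia | exact Hf].
Qed.

Lemma partial_mono a b i : (i < d)%nat ->
  eq_on_simplex (partial i (mono a b))
    (fun y => a i * mono (dec_at a i) b y + (- b) * mono a (b - 1) y).
Proof.
  intros Hi x Hx. unfold partial. apply is_derive_unique.
  eapply is_derive_eq; [apply is_derive_mono; assumption | ring].
Qed.

Variables (gamma : nat -> R) (n : nat -> nat).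
Hypothesis d_ge1 : (1 <= d)%nat.
Hypothesis n_ge1 : forall i, (i < d)%nat -> (1 <= n i)%nat.

Definition rodrigues_mono (c : R) (m : nat -> nat) : (nat -> R) -> R :=
  mono (fun j => gamma j + INR (m j)) (c + absn d m).

Lemma absn_gt0 : 0 < absn d n.
Proof.
  assert (1 <= INR (n 0%nat)) by (apply (le_INR 1), n_ge1; lia).
  assert (INR (n 0%nat) <= absn d n)
    by (apply (sumR_ge_term d (fun i => INR (n i))); [intros; apply pos_INR | lia]).
  lra.
Qed.

Lemma Dmulti_rodrigues_mono_partial_first i : (i < d)%nat ->
  eq_on_simplex (Dmulti d n (rodrigues_mono 0 n))
    (fun y => (gamma i + INR (n i)) * Dmulti d (sub_e n i) (rodrigues_mono 1 (sub_e n i)) y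
              + (- absn d n) * Dmulti d (sub_e n i) (rodrigues_mono (-1) n) y).
Proof.
  intros Hi.
  eapply eq_on_simplex_trans;
    [apply Dmulti_partial_first; [lia | exact Hi | apply n_ge1, Hi | apply simplex_poly_mono]|].
  eapply eq_on_simplex_trans; [|apply Dmulti_lin; [lia | apply simplex_poly_mono ..]].
  apply Dmulti_eq_on_simplex; [lia|].
  eapply eq_on_simplex_trans; [apply partial_mono, Hi|].
  intros y _. unfold rodrigues_mono.
  replace (0 + absn d n - 1) with (-1 + absn d n) by ring.
  rewrite (mono_ext (dec_at _ i) (fun j => gamma j + INR (sub_e n i j))
                    _ (1 + absn d (sub_e n i))); [ring | |].
  - intros j Hj. unfold dec_at, sub_e. destruct (Nat.eqb_spec j i); [|reflexivity].
    subst. rewrite minus_INR by (apply n_ge1, Hj). simpl. ring.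
  - rewrite absn_sub_e by (exact Hi || apply n_ge1, Hi). ring.
Qed.

Lemma weight_Dmulti_rodrigues_mono x : in_simplex_interior d x ->
  (1 - absx d x) * Dmulti d n (rodrigues_mono (-1) n) x =
  sumR d (fun i => INR (n i) * (gamma i + INR (n i)) / absn d n *
                   Dmulti d (sub_e n i) (rodrigues_mono 1 (sub_e n i)) x).
Proof.
  intros Hx.
  set (F := rodrigues_mono (-1) n). set (H := rodrigues_mono 0 n).
  assert (Hm := absn_gt0).
  assert (Hleibniz := Dmulti_weight d n F (le_n d) (simplex_poly_mono _ _) x Hx).
  assert (HwF : eq_on_simplex (fun y => (1 - absx d y) * F y) H).
  { intros y Hy. unfold F, H, rodrigues_mono. rewrite <- mono_weight by exact Hy.
    apply mono_ext; [reflexivity | ring]. }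
  rewrite (Dmulti_eq_on_simplex d n _ _ (le_n d) HwF x Hx) in Hleibniz.
  assert (Havg : Dmulti d n H x = sumR d (fun i => INR (n i) / absn d n * Dmulti d n H x)).
  { rewrite (sumR_ext d _ (fun i => / absn d n * Dmulti d n H x * INR (n i)))
      by (intros; unfold Rdiv; ring).
    rewrite sumR_scal. fold (absn d n). field. lra. }
  rewrite (sumR_ext d _ (fun i => INR (n i) * (gamma i + INR (n i)) / absn d n *
                                  Dmulti d (sub_e n i) (rodrigues_mono 1 (sub_e n i)) x
                                  + (- 1) * (INR (n i) * Dmulti d (sub_e n i) F x))) in Havg.
  - rewrite sumR_add, sumR_scal in Havg. lra.
  - intros i Hi. unfold H. rewrite (Dmulti_rodrigues_mono_partial_first i Hi x Hx). fold F.
    field. lra.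
Qed.

End SimplexPolynomials.

Lemma Rodrigues_Dmulti d gamma c n x :
  Rodrigues d gamma c n x =
  prodR d (fun i => rpow (x i) (- gamma i)) * rpow (1 - absx d x) (- c) *
  Dmulti d n (rodrigues_mono d gamma c n) x.
Proof. reflexivity. Qed.

Theorem lemma4p1 (d : nat) (gamma : nat -> R) (n : nat -> nat) (x : nat -> R) :
  (1 <= d)%nat ->
  (forall i, (i < d)%nat -> (1 <= n i)%nat) ->
  in_simplex_interior d x ->
  Rodrigues d gamma (-1) n x =
  (1 - absx d x) *
  sumR d (fun i => INR (n i) * (gamma i + INR (n i)) / absn d n *
                   Rodrigues d gamma 1 (sub_e n i) x).
Proof.
  intros Hd Hn Hx.
  set (P := prodR d (fun i => rpow (x i) (- gamma i))).
  set (w := 1 - absx d x).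
  assert (Hw : 0 < w) by apply (simplex_weight_gt0 d x Hx).
  rewrite (sumR_ext d (fun i => INR (n i) * (gamma i + INR (n i)) / absn d n *
                                Rodrigues d gamma 1 (sub_e n i) x)
                      (fun i => P * rpow w (- (1)) * (INR (n i) * (gamma i + INR (n i)) / absn d n *
                                Dmulti d (sub_e n i) (rodrigues_mono d gamma 1 (sub_e n i)) x)))
    by (intros; rewrite Rodrigues_Dmulti; fold P w; ring).
  rewrite sumR_scal, <- (weight_Dmulti_rodrigues_mono d gamma n Hd Hn x Hx), Rodrigues_Dmulti.
  fold P w. unfold rpow. replace (- -1) with 1 by ring.
  rewrite Rpower_Ropp, Rpower_1 by exact Hw.
  field. lra.
Qed.
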